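(* For every integer $n\geq 0$ (with $5n-1\ge0$ in the case of the minus sign), \[ \overline{p}\big(5^3(5n\pm1)\big)\equiv 0 \pmod{5}. \]
   Context: An overpartition of a nonnegative integer $n$ is a partition of $n$ in which the first occurrence of each distinct part may be overlined. $\overline{p}(n)$ denotes the number of overpartitions of $n$, with $\overline{p}(0)=1$; equivalently $\sum_{n\ge0}\overline{p}(n)q^n=\prod_{k\ge1}\frac{1+q^k}{1-q^k}$. *)

From mathcomp Require Import all_boot.
Set Implicit Arguments. Unset Strict Implicit. Unset Printing Implicit Defensive.

(* An overpartition of n is encoded by its data part-by-part: for each part
   size k+1 (k : 'I_n, so sizes 1..n) a multiplicity m k (< n+1) and a flag
   b k telling whether the first occurrence of that part is overlined.  This is a
   bijective encoding of overpartitions of n (a partition is a multiset of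
   positive parts; each distinct part may have its first occurrence
   overlined). *)
Definition is_overpartition (n : nat) (f : {ffun 'I_n -> 'I_n.+1 * bool}) : bool :=
  ((\sum_(k < n) (k.+1) * (f k).1) == n) &&
  [forall k, (f k).2 ==> (0 < (f k).1)].

Definition overpartition_count (n : nat) : nat :=
  #|[pred f : {ffun 'I_n -> 'I_n.+1 * bool} | is_overpartition f]|.

From mathcomp Require Import all_boot all_order all_algebra.
From mathcomp Require Import ring zify.
Set Implicit Arguments. Unset Strict Implicit. Unset Printing Implicit Defensive.
Import GRing.Theory Num.Theory.
Local Open Scope ring_scope.

(* Gauss's identity (q; q^2)^2 (q^2; q^2) = theta(q) := sum_j (-1)^j q^(j^2), proved in finite
   form from the q-binomial theorem, shows that the overpartition generating function
   (-q; q) / (q; q) is 1 / theta(q).  Modulo 5, theta^5 = theta(q^5), so the series equals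
   theta^4 / theta(q^5).  Split theta = a + b + c according to j^2 = 0, 1, 4 (mod 5); then
   a = theta(q^25) and a^2 + b c = theta(q^5)^2, the latter because multiplication by 2 + i
   in Z[i] matches the pairs (j, l) with 5 (j^2 + l^2) = N bijectively with the pairs
   with j^2 + l^2 = N whose squares are congruent to (0, 0) or (1, 4) mod 5.
   Extracting exponents divisible by 5 repeatedly gives
     pbar(125 m) = [q^(25 m)] theta^3 = 2 [q^m] theta^3 - [q^m] theta theta(q^5)^2  (mod 5),
   and for m = +-1 (mod 5) the first coefficient is 3 times the second.
   All power series are handled as polynomials compared up to a fixed degree (eq_upto). *)

Section TruncatedEquality.
Variable R : comNzRingType.
Implicit Types p q r u : {poly R}.

Definition eq_upto (N : nat) p q := forall i, (i <= N)%N -> p`_i = q`_i.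

Lemma eq_upto_sym N p q : eq_upto N p q -> eq_upto N q p.
Proof. by move=> h i hi; rewrite h. Qed.

Lemma eq_upto_trans N p q r : eq_upto N p q -> eq_upto N q r -> eq_upto N p r.
Proof. by move=> h1 h2 i hi; rewrite h1 // h2. Qed.

Lemma eq_upto_leq M N p q : (M <= N)%N -> eq_upto N p q -> eq_upto M p q.
Proof. by move=> hMN h i hi; apply: h; apply: leq_trans hMN. Qed.

Lemma eq_uptoD N p q p' q' :
  eq_upto N p q -> eq_upto N p' q' -> eq_upto N (p + p') (q + q').
Proof. by move=> h1 h2 i hi; rewrite !coefD h1 // h2. Qed.

Lemma eq_uptoZ N a p q : eq_upto N p q -> eq_upto N (a *: p) (a *: q).
Proof. by move=> h i hi; rewrite !coefZ h. Qed.

Lemma eq_uptoMl N r p q : eq_upto N p q -> eq_upto N (r * p) (r * q).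
Proof.
move=> h i hi; rewrite !coefM; apply: eq_bigr => j _; rewrite h //.
exact: leq_trans (leq_subr _ _) hi.
Qed.

Lemma eq_uptoMr N r p q : eq_upto N p q -> eq_upto N (p * r) (q * r).
Proof. by move=> h; rewrite ![_ * r]mulrC; apply: eq_uptoMl. Qed.

Lemma eq_uptoM N p q p' q' :
  eq_upto N p q -> eq_upto N p' q' -> eq_upto N (p * p') (q * q').
Proof. by move=> h1 h2; apply: eq_upto_trans (eq_uptoMr _ h1) (eq_uptoMl _ h2). Qed.

Lemma eq_uptoX N p q k : eq_upto N p q -> eq_upto N (p ^+ k) (q ^+ k).
Proof. by move=> h; elim: k => [|k ih] //; rewrite !exprS; apply: eq_uptoM. Qed.

Lemma eq_upto_XnM e N p q :
  eq_upto N p q -> eq_upto (e + N) ('X^e * p) ('X^e * q).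
Proof. by move=> h i hi; rewrite !coefXnM; case: ltnP => // hei; apply: h; lia. Qed.

Lemma eq_upto_XnM0 N e p : (N < e)%N -> eq_upto N ('X^e * p) 0.
Proof. by move=> he i hi; rewrite coefXnM coef0; case: ltnP => //; lia. Qed.

Lemma eq_upto_1subXn N e : (N < e)%N -> eq_upto N (1 - 'X^e) 1.
Proof.
by move=> he i hi; rewrite coefB coefXn (_ : (i == e) = false) ?subr0 //; lia.
Qed.

Lemma eq_upto_mulKl N u p q :
  u`_0 = 1 -> eq_upto N (u * p) (u * q) -> eq_upto N p q.
Proof.
move=> u0 h; suff pq0 i : (i <= N)%N -> (p - q)`_i = 0.
  by move=> i /pq0 /eqP; rewrite coefB subr_eq0 => /eqP.
elim/ltn_ind: i => i ih hi.
have /eqP := h i hi; rewrite -subr_eq0 -coefB -mulrBr mulrC coefM big_ord_recr /=.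
rewrite subnn u0 mulr1 big1 ?add0r => [/eqP // | j _].
by rewrite ih ?mul0r //; apply: leq_trans (ltnW (ltn_ord j)) hi.
Qed.

Lemma eq_upto_prod N (I : Type) (r : seq I) (P : pred I) (F G : I -> {poly R}) :
  (forall i, P i -> eq_upto N (F i) (G i)) ->
  eq_upto N (\prod_(i <- r | P i) F i) (\prod_(i <- r | P i) G i).
Proof. by move=> h; apply: (big_ind2 (eq_upto N)) => // *; apply: eq_uptoM. Qed.

Lemma eq_upto_prod1 N (I : Type) (r : seq I) (P : pred I) (F : I -> {poly R}) :
  (forall i, P i -> eq_upto N (F i) 1) -> eq_upto N (\prod_(i <- r | P i) F i) 1.
Proof.
move=> h; apply: (big_ind (eq_upto N ^~ 1)) => // x y hx hy.
by rewrite -(mulr1 1); apply: eq_uptoM.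
Qed.

Lemma eq_upto_sum N (I : Type) (r : seq I) (P : pred I) (F G : I -> {poly R}) :
  (forall i, P i -> eq_upto N (F i) (G i)) ->
  eq_upto N (\sum_(i <- r | P i) F i) (\sum_(i <- r | P i) G i).
Proof. by move=> h; apply: (big_ind2 (eq_upto N)) => // *; apply: eq_uptoD. Qed.

End TruncatedEquality.

Section QBinomial.
Variable S : comNzRingType.
Variable Q : S.

Fixpoint qbinom (m k : nat) : S :=
  match m, k with
  | 0, 0 => 1
  | 0, _ => 0
  | m'.+1, 0 => 1
  | m'.+1, k'.+1 => qbinom m' k'.+1 + Q ^+ (m' - k') * qbinom m' k'
  end.

Lemma qbinom_small m k : (m < k)%N -> qbinom m k = 0.
Proof. by elim: m k => [|m ih] [|k] //= hk; rewrite !ih ?mulr0 ?addr0 // ltnW. Qed.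

Lemma qbinom0 m : qbinom m 0 = 1. Proof. by case: m. Qed.

Definition qpoch (t : nat) : S := \prod_(i < t) (1 - Q ^+ i.+1).

Lemma qpochS t : qpoch t.+1 = qpoch t * (1 - Q ^+ t.+1).
Proof. by rewrite /qpoch big_ord_recr. Qed.

Lemma qpoch_qbinom m k : (k <= m)%N -> qpoch k * qpoch (m - k) * qbinom m k = qpoch m.
Proof.
elim: m k => [|m ih] [|k] //= hk.
- by rewrite /qpoch !big_ord0 !mul1r.
- by rewrite subn0 /qpoch big_ord0 !mul1r mulr1.
have IHk : qpoch k.+1 * qpoch (m - k) * (Q ^+ (m - k) * qbinom m k)
           = Q ^+ (m - k) * (1 - Q ^+ k.+1) * qpoch m.
  by rewrite -(ih k hk) qpochS; ring.
rewrite subSS mulrDr IHk; case: (ltnP k m) => hkm; last first.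
  have -> : k = m by lia.
  by rewrite qbinom_small // mulr0 add0r subnn expr0 mul1r qpochS; ring.
have IHk1 : qpoch k.+1 * qpoch (m - k) * qbinom m k.+1 = (1 - Q ^+ (m - k)) * qpoch m.
  rewrite -(ih k.+1 hkm); have -> : (m - k = (m - k.+1).+1)%N by lia.
  rewrite [qpoch (_ - _).+1]qpochS; ring.
have -> : Q ^+ (m - k) * (1 - Q ^+ k.+1) = Q ^+ (m - k) - Q ^+ m.+1.
  by rewrite mulrBr mulr1 -exprD; congr (_ - Q ^+ _); lia.
rewrite IHk1 qpochS; ring.
Qed.

Variables x y : S.

Lemma qbinomial_theorem m : \prod_(i < m) (x + y * Q ^+ i) =
  \sum_(k < m.+1) Q ^+ 'C(k, 2) * qbinom m k * y ^+ k * x ^+ (m - k).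
Proof.
elim: m => [|m ih]; first by rewrite big_ord0 big_ord1 /= !expr0 !mul1r.
rewrite big_ord_recr /= ih mulrDr !mulr_suml (big_ord_recl m.+1) /=.
have -> : \sum_(i < m.+1) Q ^+ 'C(bump 0 i, 2) * qbinom m.+1 (bump 0 i) *
    y ^+ bump 0 i * x ^+ (m.+1 - bump 0 i) =
  \sum_(i < m.+1) Q ^+ 'C(i.+1, 2) * qbinom m i.+1 * y ^+ i.+1 * x ^+ (m - i)
  + \sum_(i < m.+1) Q ^+ 'C(i, 2) * qbinom m i * y ^+ i * x ^+ (m - i) * (y * Q ^+ m).
  rewrite -big_split; apply: eq_bigr => i _ /=.
  rewrite /bump /= add1n subSS binS bin1 exprD.
  have -> : Q ^+ m = Q ^+ i * Q ^+ (m - i) by rewrite -exprD subnKC // -ltnS.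
  rewrite exprS; ring.
rewrite addrA; congr (_ + _).
rewrite [in RHS]big_ord_recr /= qbinom_small // mulr0 !mul0r addr0.
rewrite big_ord_recl /= subn0 qbinom0 !expr0 !mul1r -exprSr; congr (_ + _).
apply: eq_bigr => i _; rewrite /bump /= add1n.
have -> : (m - i = (m - i.+1).+1)%N by have := ltn_ord i; lia.
rewrite [x ^+ (_ - _).+1]exprS; ring.
Qed.

End QBinomial.

Lemma bin2_double k : (2 * 'C(k, 2) = k * k.-1)%N.
Proof. by rewrite bin2 mul2n halfK oddM; case: k => //= k; rewrite andNb subn0. Qed.

Lemma sign_distn (R : pzRingType) (k n : nat) :
  (-1) ^+ `|k - n|%N = (-1) ^+ (k + n) :> R.
Proof. by rewrite -signr_odd -[RHS]signr_odd; congr (_ ^+ _); lia. Qed.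

Section FiniteGauss.
Variable R : idomainType.
Local Notation P := {poly R}.

Definition oddpoch n : P := \prod_(j < n) (1 - 'X^((2 * j).+1)).

Definition gauss_sum n : P := \sum_(k < (n + n).+1)
  (-1) ^+ `|k - n|%N *: ('X^(`|k - n| ^ 2) * qbinom 'X^2 (n + n) k).

Lemma prod_oppXn_even n :
  \prod_(i < n) - ('X^(2 * i) : P) = (-1) ^+ n * 'X^(n * n.-1).
Proof.
elim: n => [|n ih]; first by rewrite big_ord0 expr0 mul1r.
rewrite big_ord_recr /= ih -mulN1r.
have -> : (n.+1 * n = n * n.-1 + 2 * n)%N by case: n {ih} => //= n; ring.
rewrite exprD exprS; ring.
Qed.

Lemma prod_subXn_even n : \prod_(i < n + n) ('X^((n + n).-1) - ('X^2 : P) ^+ i) =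
  (-1) ^+ n * 'X^((3 * n - 2) * n) * oddpoch n ^+ 2.
Proof.
rewrite big_split_ord /=.
have low : \prod_(i < n) ('X^((n + n).-1) - ('X^2 : P) ^+ lshift n i) =
    \prod_(i < n) - 'X^(2 * i) * oddpoch n.
  rewrite /oddpoch [\prod_(j < n) (1 - _)](reindex_inj rev_ord_inj) -big_split /=.
  apply: eq_bigr => i _; rewrite -exprM mulrBr mulr1 mulNr -exprD opprK addrC.
  by congr (_ + 'X^_); have := ltn_ord i; lia.
have high : \prod_(i < n) ('X^((n + n).-1) - ('X^2 : P) ^+ rshift n i) =
    'X^((n + n).-1) ^+ n * oddpoch n.
  have -> : 'X^((n + n).-1) ^+ n = \prod_(i < n) ('X^((n + n).-1) : P).
    by rewrite prodr_const card_ord.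
  rewrite /oddpoch -big_split /=.
  apply: eq_bigr => i _; rewrite -exprM mulrBr mulr1 -exprD.
  by congr (_ - 'X^_); have := ltn_ord i; lia.
rewrite low high prod_oppXn_even -exprM.
have -> : ((3 * n - 2) * n = n * n.-1 + (n + n).-1 * n)%N.
  by case: n {low high} => //= n; lia.
rewrite exprD; ring.
Qed.

Lemma oddpoch_sqr n : oddpoch n ^+ 2 = gauss_sum n.
Proof.
have := qbinomial_theorem ('X^2 : P) ('X^((n + n).-1)) (-1) (n + n).
under eq_bigr do rewrite mulN1r.
rewrite prod_subXn_even => cauchy.
have unit_factor : ((-1) ^+ n * 'X^((3 * n - 2) * n) : P) != 0.
  by rewrite mulf_neq0 ?signr_eq0 ?monic_neq0 ?monicXn.
apply: (mulfI unit_factor); rewrite cauchy /gauss_sum mulr_sumr.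
apply: eq_bigr => k _; have hk : (k <= n + n)%N by have := ltn_ord k; lia.
have exps : (2 * 'C(k, 2) + (n + n).-1 * (n + n - k) =
    `|k - n| ^ 2 + (3 * n - 2) * n)%N.
  by rewrite bin2_double; nia.
have sign_k : (-1) ^+ k = (-1) ^+ `|k - n|%N * (-1) ^+ n :> P.
  by rewrite sign_distn -exprD -[LHS]signr_odd -[RHS]signr_odd; congr (_ ^+ _); lia.
rewrite -!exprM -mul_polyC rmorphXn rmorphN1 sign_k.
have -> : ('X^(2 * 'C(k, 2)) : P) * qbinom 'X^2 (n + n) k *
    ((-1) ^+ `|k - n|%N * (-1) ^+ n) * 'X^((n + n).-1 * (n + n - k)) =
    'X^(2 * 'C(k, 2) + (n + n).-1 * (n + n - k)) * qbinom 'X^2 (n + n) k *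
    ((-1) ^+ `|k - n|%N * (-1) ^+ n) by rewrite exprD; ring.
by rewrite exps exprD; ring.
Qed.

End FiniteGauss.

Section ThetaTruncation.
Variable R : idomainType.
Local Notation P := {poly R}.

Definition theta n : P :=
  \sum_(k < (n + n).+1) (-1) ^+ `|k - n|%N *: 'X^(`|k - n| ^ 2).

Lemma qpoch_Xn_stable e s t : (0 < e)%N -> (s <= t)%N ->
  eq_upto (e * s.+1).-1 (qpoch ('X^e : P) t) (qpoch 'X^e s).
Proof.
move=> e_gt0; elim: t => [|t ih] hst; first by have -> : s = 0%N by lia.
have [-> // | ne_st] := eqVneq s t.+1.
rewrite qpochS -[X in eq_upto _ _ X]mulr1; apply: eq_uptoM; first by apply: ih; lia.
by rewrite -exprM; apply: eq_upto_1subXn; nia.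
Qed.

Lemma qpoch_Xn_coef0 e s : (0 < e)%N -> (qpoch ('X^e : P) s)`_0 = 1.
Proof.
move=> e_gt0; have h : eq_upto 0 (qpoch ('X^e : P) s) 1.
  by apply: eq_upto_prod1 => i _; rewrite -exprM; apply: eq_upto_1subXn; nia.
by rewrite h // coef1.
Qed.

Lemma qbinom_Xn_trunc e m k s t : (0 < e)%N ->
  (k <= m)%N -> (s <= k)%N -> (s <= m - k)%N -> (s <= t)%N ->
  eq_upto (e * s.+1).-1 (qbinom ('X^e : P) m k * qpoch 'X^e t) 1.
Proof.
move=> e_gt0 hkm hsk hsmk hst; set u := qpoch ('X^e : P) s.
have hu : eq_upto (e * s.+1).-1 (u * (qbinom 'X^e m k * u)) (u * 1).
  have -> : u * (qbinom 'X^e m k * u) = u * u * qbinom 'X^e m k by ring.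
  rewrite mulr1; apply: eq_upto_trans (_ : eq_upto _ _ (qpoch 'X^e m)) _.
    rewrite -(qpoch_qbinom _ hkm); apply: eq_uptoMr.
    by apply: eq_uptoM; apply: eq_upto_sym; apply: qpoch_Xn_stable.
  by apply: qpoch_Xn_stable; lia.
apply: eq_upto_trans (eq_upto_mulKl (qpoch_Xn_coef0 s e_gt0) hu).
by apply: eq_uptoMl; apply: qpoch_Xn_stable.
Qed.

Lemma theta_trunc n : eq_upto n (oddpoch R n ^+ 2 * qpoch 'X^2 n) (theta n).
Proof.
rewrite oddpoch_sqr /gauss_sum /theta mulr_suml; apply: eq_upto_sum => k _.
rewrite -scalerAl -mulrA; apply: eq_uptoZ.
have hk := ltn_ord k; set d := `|k - n|%N.
have trunc : eq_upto (2 * (n - d).+1).-1 (qbinom ('X^2 : P) (n + n) k * qpoch 'X^2 n) 1.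
  by apply: qbinom_Xn_trunc; rewrite /d; lia.
have := eq_upto_XnM (e := (d ^ 2)%N) trunc.
by rewrite mulr1; apply: eq_upto_leq; rewrite /d; nia.
Qed.

Lemma theta_coef0 n : (theta n)`_0 = 1.
Proof.
rewrite -(@theta_trunc n 0) //.
have h : eq_upto 0 (oddpoch R n ^+ 2 * qpoch ('X^2 : P) n) (1 ^+ 2 * 1).
  apply: eq_uptoM; first apply: eq_uptoX.
    by apply: eq_upto_prod1 => j _; apply: eq_upto_1subXn.
  by apply: eq_upto_prod1 => j _; rewrite -exprM; apply: eq_upto_1subXn.
by rewrite h // expr1n mulr1 coef1.
Qed.

End ThetaTruncation.

Section OverpartitionSeries.
Variable R : idomainType.
Local Notation P := {poly R}.

Definition qpoch_neg N : P := \prod_(k < N) (1 + 'X^(k.+1)).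

Definition geom_trunc N k : P := \sum_(m < N.+1) 'X^(k * m).

Definition qpoch_inv_trunc N : P := \prod_(k < N) geom_trunc N k.+1.

Definition part_series N (k : nat) : P := \sum_(t : 'I_N.+1 * bool)
  (if t.2 ==> (0 < t.1)%N then 'X^(k.+1 * t.1) else 0).

Definition overpartition_series N : P := \prod_(k < N) part_series N k.

Lemma prod_if_Xn (I : finType) (c : pred I) (e : I -> nat) :
  \prod_(i : I) (if c i then ('X^(e i) : P) else 0) =
  if [forall i, c i] then 'X^(\sum_i e i) else 0.
Proof.
have [/forallP call | /forallPn [i ci]] := boolP [forall i, c i].
  rewrite (big_morph (fun n => ('X^n : P)) (exprD _) (expr0 _)).
  by apply: eq_bigr => i _; rewrite call.
by rewrite (bigD1 i) //= (negbTE ci) mul0r.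
Qed.

Lemma overpartition_count_coef N :
  (overpartition_count N)%:R = (overpartition_series N)`_N :> R.
Proof.
rewrite /overpartition_series /part_series bigA_distr_bigA /= coef_sum.
under eq_bigr do rewrite prod_if_Xn (fun_if (fun p : P => p`_N)) coefXn coef0.
rewrite /overpartition_count -sum1_card big_mkcond natr_sum /=.
apply: eq_bigr => f _; rewrite /is_overpartition inE /=.
by case: [forall _, _]; rewrite ?andbF ?andbT //= eq_sym; case: eqP.
Qed.

Lemma oddpoch_qpoch_X2 N : oddpoch R N * qpoch ('X^2 : P) N = qpoch 'X (N + N).
Proof.
elim: N => [|N ih]; first by rewrite /oddpoch /qpoch !big_ord0 mulr1.
rewrite /oddpoch big_ord_recr qpochS /= -/(oddpoch R N) -exprM.
have -> : (N.+1 + N.+1 = (N + N).+2)%N by lia.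
rewrite !qpochS -ih.
have -> : ((N + N).+2 = 2 * N.+1)%N by lia.
have -> : ((N + N).+1 = (2 * N).+1)%N by lia.
ring.
Qed.

Lemma qpoch_neg_qpoch N : qpoch_neg N * qpoch 'X N = qpoch ('X^2 : P) N.
Proof.
rewrite /qpoch_neg /qpoch -big_split; apply: eq_bigr => k _ /=.
by rewrite -exprM mulnC exprM; ring.
Qed.

Lemma geom_truncE k M : (1 - 'X^k) * geom_trunc M k = 1 - 'X^(k * M.+1).
Proof.
elim: M => [|M ih]; first by rewrite /geom_trunc big_ord1 muln0 expr0 mulr1 muln1.
rewrite /geom_trunc big_ord_recr /= mulrDr ih.
have -> : (k * M.+2 = k * M.+1 + k)%N by rewrite mulnS addnC.
rewrite exprD; ring.
Qed.

Lemma qpoch_inv_truncP N : eq_upto N (qpoch 'X N * qpoch_inv_trunc N) 1.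
Proof.
rewrite /qpoch /qpoch_inv_trunc -big_split /=; apply: eq_upto_prod1 => k _.
by rewrite geom_truncE; apply: eq_upto_1subXn; nia.
Qed.

Lemma part_series_trunc N k :
  eq_upto N (part_series N k) ((1 + 'X^(k.+1)) * geom_trunc N k.+1).
Proof.
have -> : part_series N k = geom_trunc N k.+1 + \sum_(m < N) 'X^(k.+1 * m.+1).
  rewrite /part_series -(pair_bigA _ (fun (m : 'I_N.+1) (b : bool) =>
      if b ==> (0 < m)%N then ('X^(k.+1 * m) : P) else 0)) /=.
  under eq_bigr do rewrite big_bool /=.
  by rewrite big_split /= addrC; congr (_ + _); rewrite big_ord_recl /= add0r.
rewrite mulrDl mul1r; apply: eq_uptoD => //.
rewrite /geom_trunc mulr_sumr big_ord_recr /= -[X in eq_upto _ X _]addr0.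
under [X in eq_upto _ _ (X + _)]eq_bigr do rewrite -exprD -mulnS.
apply: eq_uptoD => //.
by rewrite -exprD -[X in eq_upto _ _ X]mulr1; apply: eq_upto_sym; apply: eq_upto_XnM0; nia.
Qed.

Lemma overpartition_series_theta N :
  eq_upto N (overpartition_series N * theta R N) 1.
Proof.
have Xpos : (0 < 1)%N by [].
apply: (@eq_upto_mulKl _ _ (qpoch 'X N ^+ 2)).
  by rewrite expr2 coef0M; have := qpoch_Xn_coef0 R N Xpos; rewrite expr1 => ->; rewrite mulr1.
set D := qpoch ('X^2 : P) N.
apply: (@eq_upto_trans _ _ _ (qpoch 'X N ^+ 2 *
    (qpoch_neg N * qpoch_inv_trunc N * (oddpoch R N ^+ 2 * D)))).
  apply: eq_uptoMl; apply: eq_uptoM; last exact: eq_upto_sym (@theta_trunc R N).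
  rewrite /overpartition_series /qpoch_neg /qpoch_inv_trunc -big_split.
  by apply: eq_upto_prod => k _; apply: part_series_trunc.
apply: (@eq_upto_trans _ _ _ (D * 1 * (oddpoch R N ^+ 2 * D))).
  have -> : qpoch 'X N ^+ 2 * (qpoch_neg N * qpoch_inv_trunc N * (oddpoch R N ^+ 2 * D))
    = qpoch_neg N * qpoch 'X N * (qpoch 'X N * qpoch_inv_trunc N) * (oddpoch R N ^+ 2 * D)
    by ring.
  by rewrite qpoch_neg_qpoch; apply/eq_uptoMr/eq_uptoMl/qpoch_inv_truncP.
have -> : D * 1 * (oddpoch R N ^+ 2 * D) = qpoch 'X (N + N) ^+ 2.
  by rewrite -oddpoch_qpoch_X2 -/D; ring.
rewrite mulr1; apply: eq_uptoX.
by have := qpoch_Xn_stable R Xpos (leq_addr N N); rewrite expr1 mul1n.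
Qed.

End OverpartitionSeries.

Section ResidueClasses.
Variable R : comNzRingType.
Variable d : nat.
Implicit Types p q : {poly R}.

Definition supp_mod r p := forall i, (i %% d != r)%N -> p`_i = 0.

Definition vanish_mod s p := forall i, (i %% d = s)%N -> p`_i = 0.

Definition sect_mod r p : {poly R} :=
  \poly_(i < size p) (if (i %% d == r)%N then p`_i else 0).

Lemma supp_modM r s p q :
  supp_mod r p -> supp_mod s q -> supp_mod ((r + s) %% d)%N (p * q).
Proof.
move=> hp hq i hi; rewrite coefM big1 // => j _.
have [/eqP pj|] := boolP (j %% d == r)%N; last by move/hp->; rewrite mul0r.
have [/eqP qj|] := boolP ((i - j) %% d == s)%N; last by move/hq->; rewrite mulr0.
have ji : (j <= i)%N by have := ltn_ord j; lia.
by move: hi; rewrite -pj -qj modnDm subnKC // eqxx.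
Qed.

Lemma supp_modX r p k : supp_mod r p -> supp_mod ((r * k) %% d)%N (p ^+ k).
Proof.
move=> hp; elim: k => [|k ih].
  by move=> i; rewrite muln0 mod0n expr0 coef1; case: (i =P 0)%N => [->|]; rewrite ?mod0n.
by rewrite exprS mulnS -modnDmr; apply: supp_modM.
Qed.

Lemma supp_mod_natmul r p k : supp_mod r p -> supp_mod r (k%:R * p).
Proof. by move=> hp i hi; rewrite mulr_natl coefMn hp // mul0rn. Qed.

Lemma supp_mod_sect r p : supp_mod r (sect_mod r p).
Proof. by move=> i hi; rewrite coef_poly (negbTE hi) if_same. Qed.

Lemma coef_sect_mod r p i : (i %% d = r)%N -> (sect_mod r p)`_i = p`_i.
Proof.
move=> /eqP hi; rewrite coef_poly hi; case: ltnP => // hs.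
by rewrite nth_default.
Qed.

Lemma vanish_modD s p q : vanish_mod s p -> vanish_mod s q -> vanish_mod s (p + q).
Proof. by move=> hp hq i hi; rewrite coefD hp // hq // addr0. Qed.

Lemma vanish_mod_supp r s p : supp_mod r p -> (r %% d != s)%N -> vanish_mod s p.
Proof.
move=> hp hrs i hi; apply: hp; apply: contra hrs => /eqP <-.
by rewrite modn_mod hi.
Qed.

Lemma vanish_mod_sub_sect r p : vanish_mod r (p - sect_mod r p).
Proof. by move=> i hi; rewrite coefB coef_sect_mod // subrr. Qed.

Lemma vanish_mod0M p q : vanish_mod 0 p -> supp_mod 0 q -> vanish_mod 0 (p * q).
Proof.
move=> hp hq i hi; rewrite coefM big1 // => j _.
have [/eqP pj|] := boolP (j %% d == 0)%N; first by rewrite hp // mul0r.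
move=> nj; rewrite hq ?mulr0 //; apply: contra nj => dvd_ij.
have ji : (j <= i)%N by have := ltn_ord j; lia.
by rewrite -[nat_of_ord j](subKn ji); apply: (dvdn_sub _ dvd_ij); apply/eqP.
Qed.

End ResidueClasses.

Lemma sqr_mod5_eq0 j : (j ^ 2 %% 5 == 0)%N = (j %% 5 == 0)%N.
Proof. by rewrite -modnXm; case: (j %% 5)%N (ltn_pmod j (isT : 0 < 5)%N) => [|[|[|[|[|]]]]]. Qed.

Lemma sqr_mod5_eq1 j : (j ^ 2 %% 5 == 1)%N = (j %% 5 == 1)%N || (j %% 5 == 4)%N.
Proof. by rewrite -modnXm; case: (j %% 5)%N (ltn_pmod j (isT : 0 < 5)%N) => [|[|[|[|[|]]]]]. Qed.

Lemma sqr_mod5_eq4 j : (j ^ 2 %% 5 == 4)%N = (j %% 5 == 2)%N || (j %% 5 == 3)%N.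
Proof. by rewrite -modnXm; case: (j %% 5)%N (ltn_pmod j (isT : 0 < 5)%N) => [|[|[|[|[|]]]]]. Qed.

Lemma sign_exp_odd (R : pzRingType) m k : odd k -> ((-1) ^+ m) ^+ k = (-1) ^+ m :> R.
Proof. by move=> odd_k; rewrite -exprM -signr_odd oddM odd_k andbT signr_odd. Qed.

Section ThetaDissection.
Variable R : idomainType.
Local Notation P := {poly R}.
Variable n : nat.
Local Notation I := 'I_(n + n).+1.

(* The index k of a theta sum stands for the summation variable j = k - n in [-n, n]. *)
Definition tidx (k : I) : int := k%:Z - n%:Z.

Definition of_tidx (x : int) : I := inord (absz (x + n%:Z)).

Lemma tidx_bound k : (absz (tidx k) <= n)%N.
Proof. by have := ltn_ord k; rewrite /tidx; lia. Qed.

Lemma of_tidxK x : (absz x <= n)%N -> tidx (of_tidx x) = x.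
Proof. by move=> h; rewrite /tidx /of_tidx inordK; lia. Qed.

Lemma tidxK k : of_tidx (tidx k) = k.
Proof. by have hk := ltn_ord k; apply: val_inj; rewrite /= /of_tidx /tidx inordK; lia. Qed.

Definition theta_sum (A : pred nat) (e : nat -> nat) : P :=
  \sum_(k : I | A (absz (tidx k))) (-1) ^+ absz (tidx k) *: 'X^(e (absz (tidx k))).

Definition theta_sec r : P := theta_sum (fun j => j ^ 2 %% 5 == r)%N (fun j => j ^ 2)%N.

Definition theta_dil m : P := theta_sum predT (fun j => m * j ^ 2)%N.

Lemma coef_theta_sum (A : pred nat) e i : (theta_sum A e)`_i =
  \sum_(k : I | A (absz (tidx k)) && (e (absz (tidx k)) == i)) (-1) ^+ absz (tidx k).
Proof. exact: coef_sumMXn. Qed.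

Lemma supp_mod_theta_sum d r (A : pred nat) e :
  (forall j, A j -> e j %% d = r)%N -> supp_mod d r (theta_sum A e).
Proof.
move=> hAe i hi; rewrite coef_theta_sum big_pred0 // => k.
by apply/negbTE/andP => -[/hAe hr /eqP ei]; move: hi; rewrite -ei hr eqxx.
Qed.

Lemma supp_mod_theta_sec r : supp_mod 5 r (theta_sec r).
Proof. by apply: supp_mod_theta_sum => j /eqP. Qed.

Lemma supp_mod_theta_dil m : supp_mod m 0 (theta_dil m).
Proof. by apply: supp_mod_theta_sum => j _; rewrite modnMr. Qed.

Lemma theta_dil1 : theta R n = theta_dil 1.
Proof. by rewrite /theta_dil /theta_sum; apply: eq_bigr => k _; rewrite mul1n. Qed.

Lemma theta_secE : theta R n = theta_sec 0 + theta_sec 1 + theta_sec 4.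
Proof.
rewrite /theta_sec /theta_sum /theta (bigID (fun k : I => absz (tidx k) ^ 2 %% 5 == 0)%N).
rewrite /= -addrA; congr (_ + _).
rewrite (bigID (fun k : I => absz (tidx k) ^ 2 %% 5 == 1)%N) /=; congr (_ + _).
  by apply: eq_bigl => k; case: eqP => // ->.
by apply: eq_bigl => k; rewrite sqr_mod5_eq0 sqr_mod5_eq1 sqr_mod5_eq4; lia.
Qed.

Lemma theta_dil_comp m e : (0 < e)%N -> theta_dil m \Po 'X^e = theta_dil (e * m).
Proof.
move=> e_gt0; apply/polyP => i; rewrite coef_comp_poly_Xn // !coef_theta_sum.
have [dvd_ei | ndvd_ei] := boolP (e %| i)%N.
  apply: eq_bigl => k /=; case/dvdnP: dvd_ei => q ->.
  by rewrite mulnK // -mulnA [(e * _)%N]mulnC eqn_pmul2r.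
by rewrite big_pred0 // => k /=; apply/eqP => ei; rewrite -ei -mulnA dvdn_mulr in ndvd_ei.
Qed.

Lemma theta_frobenius : 5 \in [pchar R] -> theta R n ^+ 5 = theta_dil 5.
Proof.
move=> ch5; have frob5 : {morph (fun p : P => p ^+ 5) : x y / x + y}.
  by move=> x y; apply: exprDn_pchar; rewrite pnatE // pchar_poly.
rewrite theta_dil1 (big_morph _ frob5 (expr0n _ 5)); apply: eq_bigr => k _.
by rewrite exprZn sign_exp_odd // -exprM mul1n mulnC.
Qed.

End ThetaDissection.

Lemma sum_reindex_bij (R : nmodType) (T : finType) (P1 P2 : pred T) (f g : T -> T)
    (F1 F2 : T -> R) :
  (forall p, P1 p -> P2 (f p)) -> (forall q, P2 q -> P1 (g q)) ->
  (forall p, P1 p -> g (f p) = p) -> (forall q, P2 q -> f (g q) = q) ->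
  (forall p, P1 p -> F2 (f p) = F1 p) ->
  \sum_(p | P1 p) F1 p = \sum_(q | P2 q) F2 q.
Proof.
move=> h12 h21 hgf hfg hF; rewrite [RHS](reindex_onto f g) //=.
apply: eq_big => [p | p hp]; last by rewrite hF.
apply/idP/idP => [hp | /andP [hp /eqP <-]]; last exact: h21.
by rewrite h12 // hgf ?eqxx.
Qed.

Lemma absz_sqr (x : int) : ((absz x) ^ 2)%:Z = x ^+ 2.
Proof. by rewrite -abszX abszE ger0_norm // sqr_ge0. Qed.

Lemma leq_sqr_self (a m : nat) : (a ^ 2 <= m)%N -> (a <= m)%N.
Proof. by apply: leq_trans; case: a => // a; rewrite expnS expn1 leq_pmulr. Qed.

Lemma rot5_norm (u v : int) : (absz (2 * u - v)%R ^ 2 + absz (u + 2 * v)%R ^ 2 =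
  5 * (absz u ^ 2 + absz v ^ 2))%N.
Proof.
apply/eqP; rewrite -eqz_nat PoszD PoszM PoszD !absz_sqr; apply/eqP.
by have -> : Posz 5 = 5%:R by []; ring.
Qed.

Lemma rot5_odd (u v : int) :
  odd (absz (2 * u - v)%R + absz (u + 2 * v)%R) = odd (absz u + absz v).
Proof.
have : ((absz (2 * u - v)%R + absz (u + 2 * v)%R) %% 2 = (absz u + absz v) %% 2)%N by lia.
by rewrite !modn2; case: odd; case: odd.
Qed.

Definition res0 (j : nat) := (j %% 5 == 0)%N.
Definition res1 (j : nat) := (j %% 5 == 1)%N || (j %% 5 == 4)%N.
Definition res2 (j : nat) := (j %% 5 == 2)%N || (j %% 5 == 3)%N.

Definition sqr_class (j l : nat) := (res0 j && res0 l) || (res1 j && res2 l).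

Lemma rot5_class (x y : int) : (5 %| x - 2 * y)%Z ->
  if res2 (absz x) then sqr_class (absz y) (absz x) else sqr_class (absz x) (absz y).
Proof. rewrite /sqr_class /res0 /res1 /res2 => h; case: ifP => hx; lia. Qed.

Lemma rot5_ndvd (u v : int) :
  res2 (absz (2 * u - v)%R) -> ~~ (5 %| (u + 2 * v) - 2 * (2 * u - v))%Z.
Proof. by rewrite /res2; lia. Qed.

Lemma rot5K (u v : int) :
  ((2 * (2 * u - v) + (u + 2 * v)) %/ 5)%Z = u /\
  ((2 * (u + 2 * v) - (2 * u - v)) %/ 5)%Z = v.
Proof. by split; lia. Qed.

Lemma norm5_bound (s u v m : nat) :
  s = (5 * (u ^ 2 + v ^ 2))%N -> (s <= m)%N -> (u <= m)%N /\ (v <= m)%N.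
Proof. by move=> -> h; split; apply: leq_sqr_self; lia. Qed.

Lemma rot5_inv (x y : int) : (5 %| x - 2 * y)%Z ->
  x = 2 * ((2 * x + y) %/ 5)%Z - ((2 * y - x) %/ 5)%Z /\
  y = ((2 * x + y) %/ 5)%Z + 2 * ((2 * y - x) %/ 5)%Z.
Proof. by move=> h; split; lia. Qed.

Section ThetaSectionIdentities.
Variable R : idomainType.
Local Notation P := {poly R}.
Variable n : nat.
Local Notation I := 'I_(n + n).+1.
Local Notation a := (theta_sec R n 0).
Local Notation b := (theta_sec R n 1).
Local Notation c := (theta_sec R n 4).

Local Notation tidx := (@tidx n).
Local Notation of_tidx := (@of_tidx n).
Local Notation sign k := ((-1) ^+ absz (tidx k) : R).

Lemma coef_theta_sumM (A B : pred nat) e f i :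
  (theta_sum R n A e * theta_sum R n B f)`_i =
  \sum_(p : I * I | A (absz (tidx p.1)) && B (absz (tidx p.2)) &&
      (e (absz (tidx p.1)) + f (absz (tidx p.2)) == i)%N) sign p.1 * sign p.2.
Proof.
rewrite /theta_sum mulr_suml; under eq_bigr do rewrite mulr_sumr.
rewrite pair_big /= coef_sum [RHS]big_mkcondr /=; apply: eq_bigr => p _.
rewrite -scalerAl -scalerAr scalerA coefZ -(exprD 'X) coefXn eq_sym.
by case: eqP; rewrite ?mulr1 ?mulr0.
Qed.

(* (u, v) |-> (2u - v, u + 2v) is multiplication by 2 + i in Z[i]; it maps Z^2 onto the
   pairs (x, y) with 5 | x - 2y, and ordering the image coordinates as below lands
   exactly in class_pair. *)
Definition rot5 (p : I * I) : I * I :=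
  let u := tidx p.1 in let v := tidx p.2 in
  let x := 2 * u - v in let y := u + 2 * v in
  if res2 (absz x) then (of_tidx y, of_tidx x) else (of_tidx x, of_tidx y).

Definition unrot5 (q : I * I) : I * I :=
  let x := tidx q.1 in let y := tidx q.2 in
  if (5 %| x - 2 * y)%Z then (of_tidx ((2 * x + y) %/ 5)%Z, of_tidx ((2 * y - x) %/ 5)%Z)
  else (of_tidx ((2 * y + x) %/ 5)%Z, of_tidx ((2 * x - y) %/ 5)%Z).

Definition class_pair (q : I * I) := sqr_class (absz (tidx q.1)) (absz (tidx q.2)).

Lemma rot5P (k l : I) :
  let x := 2 * tidx k - tidx l in let y := tidx k + 2 * tidx l in
  (absz x <= n)%N -> (absz y <= n)%N ->
  [/\ class_pair (rot5 (k, l)),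
      (absz (tidx (rot5 (k, l)).1) ^ 2 + absz (tidx (rot5 (k, l)).2) ^ 2 =
        absz x ^ 2 + absz y ^ 2)%N,
      sign (rot5 (k, l)).1 * sign (rot5 (k, l)).2 = sign k * sign l &
      unrot5 (rot5 (k, l)) = (k, l)].
Proof.
move=> x y hx hy.
have dvd_xy : (5 %| x - 2 * y)%Z by rewrite /x /y; lia.
have cls := rot5_class dvd_xy.
have sgn : sign k * sign l = (-1) ^+ (absz x + absz y).
  by rewrite -exprD -signr_odd /x /y rot5_odd signr_odd.
rewrite /rot5 /= -/x -/y sgn; case: ifP => hc /=; rewrite hc in cls.
- rewrite /class_pair /= !of_tidxK // -exprD; split => //; try by rewrite addnC.
  rewrite /unrot5 /= !of_tidxK //.
  rewrite (negbTE (rot5_ndvd hc)) /x /y; have [-> ->] := rot5K (tidx k) (tidx l).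
  by rewrite !tidxK.
- rewrite /class_pair /= !of_tidxK // -exprD; split => //.
  rewrite /unrot5 /= !of_tidxK // dvd_xy /x /y; have [-> ->] := rot5K (tidx k) (tidx l).
  by rewrite !tidxK.
Qed.

Lemma unrot5P (k l : I) : class_pair (k, l) ->
  (absz (tidx k) ^ 2 + absz (tidx l) ^ 2 <= n)%N ->
  (5 * absz (tidx (unrot5 (k, l)).1) ^ 2 + 5 * absz (tidx (unrot5 (k, l)).2) ^ 2 =
    absz (tidx k) ^ 2 + absz (tidx l) ^ 2)%N /\ rot5 (unrot5 (k, l)) = (k, l).
Proof.
rewrite /class_pair /sqr_class /=; set x := tidx k; set y := tidx l => hc hn.
rewrite /unrot5 /= -/x -/y; case: ifP => h.
- have [ex ey] := rot5_inv h.
  set u := ((2 * x + y) %/ 5)%Z in ex ey *; set v := ((2 * y - x) %/ 5)%Z in ex ey *.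
  have nm := rot5_norm u v; rewrite -ex -ey in nm.
  have [hu hv] := norm5_bound nm hn.
  have hc2 : res2 (absz x) = false by move: hc; clear; rewrite /res0 /res1 /res2; lia.
  rewrite /= !of_tidxK // nm mulnDr; split => //.
  by rewrite /rot5 /= !of_tidxK // -ex -ey hc2 /x /y !tidxK.
- have h' : (5 %| y - 2 * x)%Z by move: hc h; clear; rewrite /res0 /res1 /res2; lia.
  have hc2 : res2 (absz y) by move: hc h; clear; rewrite /res0 /res1 /res2; lia.
  have [ey ex] := rot5_inv h'.
  set u := ((2 * y + x) %/ 5)%Z in ex ey *; set v := ((2 * x - y) %/ 5)%Z in ex ey *.
  have nm := rot5_norm u v; rewrite -ex -ey addnC in nm.
  have [hu hv] := norm5_bound nm hn.
  rewrite /= !of_tidxK // nm mulnDr; split => //.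
  by rewrite /rot5 /= !of_tidxK // -ex -ey hc2 /x /y !tidxK.
Qed.

Lemma theta_sec_sqr : eq_upto n (a * a + b * c) (theta_dil R n 5 ^+ 2).
Proof.
move=> i hi; rewrite expr2 coefD /theta_sec /theta_dil !coef_theta_sumM /=.
set W := fun p : I * I => sign p.1 * sign p.2.
have -> : \sum_(p : I * I | (absz (tidx p.1) ^ 2 %% 5 == 0)%N &&
      (absz (tidx p.2) ^ 2 %% 5 == 0)%N && (absz (tidx p.1) ^ 2 + absz (tidx p.2) ^ 2 == i)%N) W p
  + \sum_(p : I * I | (absz (tidx p.1) ^ 2 %% 5 == 1)%N &&
      (absz (tidx p.2) ^ 2 %% 5 == 4)%N && (absz (tidx p.1) ^ 2 + absz (tidx p.2) ^ 2 == i)%N) W p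
  = \sum_(p : I * I | class_pair p && (absz (tidx p.1) ^ 2 + absz (tidx p.2) ^ 2 == i)%N) W p.
  rewrite [RHS](bigID (fun p : I * I => res0 (absz (tidx p.1)) && res0 (absz (tidx p.2)))) /=.
  by congr (_ + _); apply: eq_bigl => p; rewrite ?sqr_mod5_eq0 ?sqr_mod5_eq1 ?sqr_mod5_eq4;
    rewrite /class_pair /sqr_class /res0 /res1 /res2; lia.
have rot5_bound (k l : I) : (5 * absz (tidx k) ^ 2 + 5 * absz (tidx l) ^ 2 == i)%N ->
    let x := absz (2 * tidx k - tidx l)%R in let y := absz (tidx k + 2 * tidx l)%R in
    [/\ (x <= n)%N, (y <= n)%N & (x ^ 2 + y ^ 2 = i)%N].
  move=> /eqP h x y; have nm := rot5_norm (tidx k) (tidx l).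
  by split; try apply: leq_sqr_self; rewrite /x /y; lia.
symmetry; apply: (sum_reindex_bij (f := rot5) (g := unrot5)).
- move=> [k l] /= /rot5_bound [hx hy hn].
  by have [-> -> _ _] := rot5P hx hy; rewrite hn eqxx.
- move=> [k l] /andP [hc /eqP hn].
  have hb : (absz (tidx k) ^ 2 + absz (tidx l) ^ 2 <= n)%N by rewrite hn.
  by have [-> _] := unrot5P hc hb; rewrite hn.
- by move=> [k l] /= /rot5_bound [hx hy _]; have [_ _ _ ->] := rot5P hx hy.
- move=> [k l] /andP [hc /eqP hn].
  have hb : (absz (tidx k) ^ 2 + absz (tidx l) ^ 2 <= n)%N by rewrite hn.
  by have [_ ->] := unrot5P hc hb.
- by move=> [k l] /= /rot5_bound [hx hy _]; have [_ _ sgn _] := rot5P hx hy; rewrite /W sgn.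
Qed.

Lemma theta_sec0_dil : eq_upto n a (theta_dil R n 25).
Proof.
move=> i hi; rewrite /theta_sec /theta_dil !coef_theta_sum /=.
have mul5_bound (l : I) : (25 * absz (tidx l) ^ 2 == i)%N -> (absz (5 * tidx l)%R <= n)%N.
  by move=> /eqP h; apply: leq_sqr_self; rewrite abszM expnMn; lia.
have div5_bound (k : I) : (absz (tidx k %/ 5)%Z <= n)%N by have := tidx_bound k; lia.
have div5K (k : I) : (absz (tidx k) ^ 2 %% 5 == 0)%N -> 5 * (tidx k %/ 5)%Z = tidx k.
  by rewrite sqr_mod5_eq0; lia.
symmetry; apply: (sum_reindex_bij (f := fun l => of_tidx (5 * tidx l))
    (g := fun k => of_tidx (tidx k %/ 5)%Z)) => [l hl | k /andP[hk /eqP <-] | l hl |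
    k /andP[hk _] | l hl]; rewrite ?of_tidxK ?mul5_bound //.
- by move/eqP: hl; rewrite abszM expnMn => hl; apply/andP; split; apply/eqP; lia.
- by rewrite -{2}(div5K k hk) abszM expnMn.
- by rewrite mulKz // tidxK.
- by rewrite div5K // tidxK.
- by rewrite abszM -signr_odd oddM /= signr_odd.
Qed.

End ThetaSectionIdentities.

Lemma coef_split_vanish (R : comNzRingType) d s (p q r : {poly R}) i :
  (i %% d = s)%N -> p = q + r -> vanish_mod d s r -> p`_i = q`_i.
Proof. by move=> hi -> hr; rewrite coefD hr // addr0. Qed.

Section Characteristic5.
Variable R : idomainType.
Local Notation P := {poly R}.
Hypothesis pchar5 : 5 \in [pchar R].
Variable N : nat.
Local Notation th := (theta R N).
Local Notation a := (theta_sec R N 0).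
Local Notation b := (theta_sec R N 1).
Local Notation c := (theta_sec R N 4).
Local Notation F := (theta_dil R N 5).
Local Notation G := (overpartition_series R N).

Lemma pchar5_poly : (5%:R : P) = 0.
Proof. by rewrite -polyC_natr (pcharf0 pchar5). Qed.

(* In the lemmas below, r collects the monomials of the expansion of a power of
   theta = a + b + c whose exponents avoid the residue class of i, or that carry a
   factor 5; vanish_mod_tac checks this. *)
Ltac supp_mod_tac := repeat first
  [ apply: supp_mod_natmul | apply: supp_modM | apply: supp_modX
  | apply: supp_mod_theta_sec | apply: supp_mod_theta_dil ].

Ltac vanish_mod_tac := repeat apply: vanish_modD;
  first [ by rewrite pchar5_poly mul0r => ? _; rewrite coef0
        | apply: vanish_mod_supp; [supp_mod_tac | by []] ].

Lemma coef_theta3_mod0 i : (i %% 5 = 0)%N -> (th ^+ 3)`_i = (a * (a * a + b * c))`_i.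
Proof.
move=> hi; apply: (coef_split_vanish hi (r := 5%:R * (a * b * c)
  + (3%:R * (a ^+ 2 * b) + 3%:R * (b ^+ 2 * c)) + (3%:R * (a * b ^+ 2) + c ^+ 3)
  + (3%:R * (a * c ^+ 2) + b ^+ 3) + (3%:R * (a ^+ 2 * c) + 3%:R * (b * c ^+ 2)))).
  by rewrite theta_secE; ring.
vanish_mod_tac.
Qed.

Lemma coef_theta3_mod1 i :
  (i %% 5 = 1)%N -> (th ^+ 3)`_i = (3%:R * (b * (a * a + b * c)))`_i.
Proof.
move=> hi; apply: (coef_split_vanish hi (r := (a ^+ 3 + 6%:R * (a * b * c))
  + (3%:R * (a * b ^+ 2) + c ^+ 3) + (3%:R * (a * c ^+ 2) + b ^+ 3)
  + (3%:R * (a ^+ 2 * c) + 3%:R * (b * c ^+ 2)))).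
  by rewrite theta_secE; ring.
vanish_mod_tac.
Qed.

Lemma coef_theta3_mod4 i :
  (i %% 5 = 4)%N -> (th ^+ 3)`_i = (3%:R * (c * (a * a + b * c)))`_i.
Proof.
move=> hi; apply: (coef_split_vanish hi (r := (a ^+ 3 + 6%:R * (a * b * c))
  + (3%:R * (a * b ^+ 2) + c ^+ 3) + (3%:R * (a * c ^+ 2) + b ^+ 3)
  + (3%:R * (a ^+ 2 * b) + 3%:R * (b ^+ 2 * c)))).
  by rewrite theta_secE; ring.
vanish_mod_tac.
Qed.

Lemma coef_theta4_mod0 i : (i %% 5 = 0)%N -> (th ^+ 4)`_i = ((a * a + b * c) ^+ 2)`_i.
Proof.
move=> hi; apply: (coef_split_vanish hi (r :=
  5%:R * (2%:R * a ^+ 2 * b * c + b ^+ 2 * c ^+ 2)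
  + (4%:R * (a ^+ 3 * b) + 12%:R * (a * b ^+ 2 * c) + c ^+ 4)
  + (6%:R * (a ^+ 2 * b ^+ 2) + 4%:R * (a * c ^+ 3) + 4%:R * (b ^+ 3 * c))
  + (6%:R * (a ^+ 2 * c ^+ 2) + 4%:R * (a * b ^+ 3) + 4%:R * (b * c ^+ 3))
  + (4%:R * (a ^+ 3 * c) + 12%:R * (a * b * c ^+ 2) + b ^+ 4))).
  by rewrite theta_secE; ring.
vanish_mod_tac.
Qed.

Lemma coef_theta2_mod0 i :
  (i %% 5 = 0)%N -> (F * th ^+ 2)`_i = (F * (a * a + 2%:R * (b * c)))`_i.
Proof.
move=> hi; apply: (coef_split_vanish hi (r := F * (2%:R * (a * b))
  + F * b ^+ 2 + F * c ^+ 2 + F * (2%:R * (a * c)))).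
  by rewrite theta_secE; ring.
vanish_mod_tac.
Qed.

Lemma coef_theta_mod1 i : (i %% 5 = 1)%N -> (th * F ^+ 2)`_i = (b * F ^+ 2)`_i.
Proof.
move=> hi; apply: (coef_split_vanish hi (r := a * F ^+ 2 + c * F ^+ 2)).
  by rewrite theta_secE; ring.
vanish_mod_tac.
Qed.

Lemma coef_theta_mod4 i : (i %% 5 = 4)%N -> (th * F ^+ 2)`_i = (c * F ^+ 2)`_i.
Proof.
move=> hi; apply: (coef_split_vanish hi (r := a * F ^+ 2 + b * F ^+ 2)).
  by rewrite theta_secE; ring.
vanish_mod_tac.
Qed.

Lemma theta_comp_X5 : th \Po 'X^5 = F.
Proof. by rewrite theta_dil1 theta_dil_comp. Qed.

Lemma theta_dil5_comp_X5 : F \Po 'X^5 = theta_dil R N 25.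
Proof. by rewrite theta_dil_comp. Qed.

Lemma theta_dil5_coef0 : F`_0 = 1.
Proof. by rewrite -theta_comp_X5 coef_comp_poly_Xn // theta_coef0. Qed.

Lemma overpartition_sect0 : eq_upto N (sect_mod 5 0 G) (F ^+ 3).
Proof.
have F0 := @supp_mod_theta_dil R N 5.
apply: (eq_upto_mulKl theta_dil5_coef0) => i hi.
have [/eqP i0 | ni0] := boolP (i %% 5 == 0)%N; last first.
  rewrite (supp_modM F0 (@supp_mod_sect _ 5 0 G) ni0).
  by rewrite (supp_modM F0 (supp_modX (k := 3) F0) ni0).
have -> : F * sect_mod 5 0 G = G * F - (G - sect_mod 5 0 G) * F by ring.
rewrite coefB (vanish_mod0M (@vanish_mod_sub_sect _ 5 0 G) F0) // subr0.
have -> : G * F = G * th * th ^+ 4 by rewrite -theta_frobenius // exprS; ring.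
rewrite (eq_uptoMr _ (@overpartition_series_theta R N)) // mul1r coef_theta4_mod0 //.
by rewrite (eq_uptoX 2 (@theta_sec_sqr R N)) // -exprM -exprS.
Qed.

Lemma overpartition_coef_mul5 : (5 %| N)%N -> G`_N = (th ^+ 3)`_(N %/ 5).
Proof.
move=> dvd5N; rewrite -(@coef_sect_mod _ 5 0) ?(eqP dvd5N) // overpartition_sect0 //.
by rewrite -theta_comp_X5 -rmorphXn coef_comp_poly_Xn // dvd5N.
Qed.

Lemma theta3_coef_mul25 m : (25 * m <= N)%N ->
  (th ^+ 3)`_(25 * m) = (th ^+ 3)`_m *+ 2 - (th * F ^+ 2)`_m.
Proof.
move=> hm; rewrite coef_theta3_mod0; last by lia.
rewrite (eq_uptoMl _ (@theta_sec_sqr R N)) // (eq_uptoMr _ (@theta_sec0_dil R N)) //.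
have -> : theta_dil R N 25 * F ^+ 2 = (F * th ^+ 2) \Po 'X^5.
  by rewrite rmorphM rmorphXn /= theta_comp_X5 theta_dil5_comp_X5.
rewrite coef_comp_poly_Xn // (_ : 5 %| 25 * m)%N ?dvdn_mulr //.
rewrite (_ : 25 * m %/ 5 = 5 * m)%N; last by lia.
rewrite coef_theta2_mod0; last by lia.
have -> : F * (a * a + 2%:R * (b * c)) = 2%:R * (F * (a * a + b * c)) - F * (a * a).
  by ring.
rewrite coefB mulr_natl coefMn (eq_uptoMl _ (@theta_sec_sqr R N)); last by lia.
rewrite (eq_uptoMl _ (eq_uptoM (@theta_sec0_dil R N) (@theta_sec0_dil R N))); last by lia.
rewrite -theta_dil5_comp_X5 -theta_comp_X5 -!rmorphXn -!rmorphM /=.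
by rewrite !coef_comp_poly_Xn // dvdn_mulr // mulKn // -exprSr -expr2.
Qed.

Lemma theta3_coef_unit m : (m <= N)%N -> (m %% 5 = 1 \/ m %% 5 = 4)%N ->
  (th ^+ 3)`_m *+ 2 = (th * F ^+ 2)`_m.
Proof.
have six (x : R) : x *+ 3 *+ 2 = x.
  rewrite -mulrnA -[(3 * 2)%N]/(1 + 5)%N mulrnDr mulr1n -(mulr_natr x 5).
  by rewrite (pcharf0 pchar5) mulr0 addr0.
move=> hm [] hm5.
- rewrite coef_theta3_mod1 // coef_theta_mod1 // mulr_natl coefMn.
  by rewrite (eq_uptoMl _ (@theta_sec_sqr R N)) // six.
- rewrite coef_theta3_mod4 // coef_theta_mod4 // mulr_natl coefMn.
  by rewrite (eq_uptoMl _ (@theta_sec_sqr R N)) // six.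
Qed.

End Characteristic5.

Lemma overpartition_count_mod5 m : (m %% 5 = 1 \/ m %% 5 = 4)%N ->
  (overpartition_count (125 * m) %% 5 = 0)%N.
Proof.
move=> hm; have ch5 : 5 \in [pchar 'F_5] by apply: pchar_Fp.
have := overpartition_count_coef 'F_5 (125 * m).
rewrite overpartition_coef_mul5 // ?dvdn_mulr // (_ : 125 * m %/ 5 = 25 * m)%N; last by lia.
rewrite theta3_coef_mul25 ?theta3_coef_unit ?subrr //; try lia.
by move/(congr1 (@nat_of_ord _)); rewrite (@val_Fp_nat 5).
Qed.

Local Close Scope ring_scope.

Theorem mainTheorem10 (n : nat) :
  overpartition_count (5 ^ 3 * (5 * n + 1)) %% 5 = 0 /\
  (0 < n -> overpartition_count (5 ^ 3 * (5 * n - 1)) %% 5 = 0).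
Proof.
by split => [|n_gt0]; apply: overpartition_count_mod5; lia.
Qed.
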